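(* Let $L$ be a finite-dimensional simple Lie algebra over a field $F$ such that every proper subalgebra of $L$ is triangulable on $L$. Then: (1) if $M$ is a maximal subalgebra of $L$, then either $M$ is abelian and no non-zero element of $M$ acts nilpotently on $L$, or $\mathrm{nil}(M)$ is a non-zero maximal nil subalgebra of $L$; (2) if $K$ is a non-zero maximal nil subalgebra of $L$, then the normalizer $N_L(K)$ of $K$ in $L$ is a maximal subalgebra of $L$; (3) for any two different maximal subalgebras $M_1,M_2$ of $L$, no non-zero element of $M_1\cap M_2$ acts nilpotently on $L$ (in particular, $M_1\cap M_2$ is abelian); (4) $L$ is two-generated.
   Context: A subalgebra $S$ of $L$ is triangulable on $L$ if $\mathrm{ad}_L S=\{\mathrm{ad}_L x\mid x\in S\}$ is a Lie algebra of linear transformations of $L$ which is simultaneously triangulable over the algebraic closure of $F$ (equivalently, every element of $S^2$ acts nilpotently on $L$). An element $x$ acts nilpotently on $L$ if $\mathrm{ad}_L x$ is nilpotent. A subalgebra is nil on $L$ if all its elements act nilpotently on $L$; a maximal nil subalgebra is a subalgebra nil on $L$ which is maximal (under inclusion) among subalgebras nil on $L$. For a subalgebra $S$, $\mathrm{nil}(S)$ is the unique maximal ideal of $S$ consisting of elements acting nilpotently on $L$. A Lie algebra is two-generated if it is generated as a Lie algebra by two of its elements. *)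

From HB Require Import structures.
From mathcomp Require Import all_boot all_order all_algebra.
Set Implicit Arguments. Unset Strict Implicit. Unset Printing Implicit Defensive.
Import GRing.Theory.
Local Open Scope ring_scope.

Section LieDefs.
Variables (F : fieldType) (L : vectType F) (br : L -> L -> L).

Definition lie_axioms : Prop :=
  [/\ (forall (a : F) (x y z : L), br (a *: x + y) z = a *: br x z + br y z),
      (forall (a : F) (x y z : L), br x (a *: y + z) = a *: br x y + br x z),
      (forall x : L, br x x = 0) &
      (forall x y z : L, br x (br y z) + br y (br z x) + br z (br x y) = 0)].

Definition is_subalgebra (S : {vspace L}) : Prop :=
  forall x y, x \in S -> y \in S -> br x y \in S.

Definition is_ideal_of (S I : {vspace L}) : Prop :=
  (I <= S)%VS /\ forall x y, x \in S -> y \in I -> br x y \in I.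

Definition is_abelian (S : {vspace L}) : Prop :=
  forall x y, x \in S -> y \in S -> br x y = 0.

Definition is_simple : Prop :=
  ~ is_abelian fullv /\
  forall I : {vspace L}, is_ideal_of fullv I -> I = 0%VS \/ I = fullv.

Definition acts_nil (x : L) : Prop :=
  exists n : nat, forall y : L, iter n (br x) y = 0.

(* matrix of ad_L x in the basis b := vbasis fullv of L (row convention:
   row i = coordinates of [x, b_i]) *)
Definition ad_mx (x : L) : 'M[F]_(\dim (fullv : {vspace L})) :=
  \matrix_(i, j) coord (vbasis fullv) j (br x (tnth (vbasis fullv) i)).

(* ad_L S is simultaneously triangulable over an algebraically closed
   extension of F (equivalently, over the algebraic closure of F). *)
Definition triangulable_on (S : {vspace L}) : Prop :=
  exists (K : closedFieldType) (f : {rmorphism F -> K})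
         (P : 'M[K]_(\dim (fullv : {vspace L}))),
    P \in unitmx /\
    forall x, x \in S -> is_trig_mx (P *m map_mx f (ad_mx x) *m invmx P).

Definition is_nil_on (S : {vspace L}) : Prop :=
  forall x, x \in S -> acts_nil x.

Definition maximal_subalgebra (M : {vspace L}) : Prop :=
  [/\ is_subalgebra M, M != fullv%VS &
      forall S : {vspace L}, is_subalgebra S -> (M <= S)%VS ->
        S = M \/ S = fullv].

Definition maximal_nil_subalgebra (K : {vspace L}) : Prop :=
  [/\ is_subalgebra K, is_nil_on K &
      forall S : {vspace L}, is_subalgebra S -> is_nil_on S -> (K <= S)%VS ->
        S = K].

Definition is_nil_of (S N : {vspace L}) : Prop :=
  [/\ is_ideal_of S N, is_nil_on N &
      forall I : {vspace L}, is_ideal_of S I -> is_nil_on I -> (I <= N)%VS].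

Definition is_normalizer (K N : {vspace L}) : Prop :=
  forall x, x \in N <-> (forall k, k \in K -> br x k \in K).

Definition two_generated : Prop :=
  exists x y : L, forall S : {vspace L}, is_subalgebra S ->
    x \in S -> y \in S -> S = fullv.

End LieDefs.

(* Triangularizing a proper subalgebra S over the algebraic closure shows that the
   elements of S acting nilpotently on L form a subspace nil(S), that [S, S] lies in
   nil(S), and that any dim L elements of nil(S) compose to zero on L.  The last fact
   drives Engel's argument: a subspace K of nil(S) stabilizing a subspace V not
   contained in K normalizes K at some v in V outside K.
   (1) If nil(M) <> 0, a nil subalgebra S strictly containing nil(M) would yield such
   a v in S normalizing nil(M); by simplicity the normalizer of nil(M) is M, so v
   would lie in nil(M).  If nil(M) = 0, then [M, M] = 0.
   (2) By simplicity the normalizer of K is proper; a proper S containing it has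
   nil(S) = K by maximality of K, so S normalizes K.
   (3) Take M1 <> M2 with D = nil(M1 :&: M2) <> 0 of largest dimension and a maximal
   M3 containing the normalizer of D.  If Mi <> M3, then nil(Mi) is not inside D (or
   Mi would normalize D), and Engel's argument in nil(Mi) makes nil(Mi :&: M3) larger
   than D.  Hence M1 = M3 = M2.
   (4) If some x <> 0 acts nilpotently, x and any y outside a maximal subalgebra
   containing x generate L by (3); otherwise x, y with [x, y] <> 0 do, since [x, y]
   acts nilpotently on L once x, y lie in a proper subalgebra. *)

From HB Require Import structures.
From mathcomp Require Import all_boot all_order all_algebra zify.
From Stdlib Require Import Classical.
Set Implicit Arguments. Unset Strict Implicit. Unset Printing Implicit Defensive.
Import GRing.Theory.
Local Open Scope ring_scope.

Section TrigGap.
Variables (R : idomainType) (n : nat).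
Implicit Types A B : 'M[R]_n.

(* [trig_gap m A]: A is lower triangular and its main diagonal and first m - 1
   subdiagonals vanish, so [trig_gap 0] is [is_trig_mx] and [trig_gap 1] is
   strict lower triangularity. *)
Definition trig_gap m A := forall i j : 'I_n, (i < j + m)%N -> A i j = 0.

Lemma trig_gap0P A : reflect (trig_gap 0 A) (is_trig_mx A).
Proof.
apply: (iffP is_trig_mxP) => h i j; first by rewrite addn0; exact: h.
by move=> lt_ij; apply: h; rewrite addn0.
Qed.

Lemma trig_gapM m k A B : trig_gap m A -> trig_gap k B -> trig_gap (m + k) (A *m B).
Proof.
move=> gapA gapB i j lt_ij; rewrite mxE big1 // => l _.
have [lt_il|le_li] := ltnP i (l + m); first by rewrite gapA ?mul0r.
by rewrite gapB ?mulr0 //; rewrite -(ltn_add2r m); apply: leq_ltn_trans le_li _; lia.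
Qed.

Lemma trig_gapDZ m a A B : trig_gap m A -> trig_gap m B -> trig_gap m (a *: A + B).
Proof. by move=> gapA gapB i j lt_ij; rewrite !mxE gapA // gapB // mulr0 addr0. Qed.

Lemma trig_gap_mx1 : trig_gap 0 (1%:M : 'M[R]_n).
Proof. exact/trig_gap0P/scalar_mx_is_trig. Qed.

Lemma trig_gapX A k : trig_gap 1 A -> trig_gap k (A ^+ k).
Proof.
move=> gapA; elim: k => [|k IHk]; first exact: trig_gap_mx1.
by rewrite exprS -mulmxE -addn1 addnC; apply: trig_gapM.
Qed.

Lemma trig_gap_eq0 A : trig_gap n A -> A = 0.
Proof. by move=> gapA; apply/matrixP => i j; rewrite mxE gapA // ltn_addl. Qed.

Lemma is_trig_mxM A B : is_trig_mx A -> is_trig_mx B -> is_trig_mx (A *m B).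
Proof. by move=> /trig_gap0P gapA /trig_gap0P gapB; apply/trig_gap0P/(trig_gapM gapA gapB). Qed.

Lemma is_trig_mxX A k : is_trig_mx A -> is_trig_mx (A ^+ k).
Proof.
move=> trigA; elim: k => [|k IHk]; first exact: scalar_mx_is_trig.
by rewrite exprS -mulmxE is_trig_mxM.
Qed.

Lemma mxdiag_trigM A B i : is_trig_mx A -> is_trig_mx B -> (A *m B) i i = A i i * B i i.
Proof.
move=> /is_trig_mxP trigA /is_trig_mxP trigB; rewrite mxE (bigD1 i) //= big1 ?addr0 // => l nli.
have [lt_il|lt_li|eq_il] := ltngtP i l; first by rewrite trigA ?mul0r.
  by rewrite trigB ?mulr0.
by rewrite (val_inj eq_il) eqxx in nli.
Qed.

Lemma mxdiag_trigX A k i : is_trig_mx A -> (A ^+ k) i i = A i i ^+ k.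
Proof.
move=> trigA; elim: k => [|k IHk]; first by rewrite !expr0 mxE eqxx.
by rewrite !exprS -mulmxE mxdiag_trigM ?is_trig_mxX // IHk.
Qed.

Lemma trig_diag0_gap1 A : is_trig_mx A -> (forall i, A i i = 0) -> trig_gap 1 A.
Proof.
move=> /is_trig_mxP trigA diag0 i j; rewrite addn1 ltnS leq_eqVlt => /orP[/eqP eq_ij|].
  by rewrite (val_inj eq_ij).
exact: trigA.
Qed.

Lemma trig_nilpotent_gap1 A k : is_trig_mx A -> A ^+ k = 0 -> trig_gap 1 A.
Proof.
move=> trigA Ak0; apply: trig_diag0_gap1 => // i.
have := mxdiag_trigX k i trigA; rewrite Ak0 mxE => /esym/eqP.
by rewrite expf_eq0 => /andP[_ /eqP].
Qed.

Lemma is_trig_mxB A B : is_trig_mx A -> is_trig_mx B -> is_trig_mx (A - B).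
Proof.
move=> /is_trig_mxP trigA /is_trig_mxP trigB; apply/is_trig_mxP => i j lt_ij.
by rewrite !mxE trigA // trigB // subr0.
Qed.

Lemma trig_commutator_gap1 A B : is_trig_mx A -> is_trig_mx B -> trig_gap 1 (A *m B - B *m A).
Proof.
move=> trigA trigB; apply: trig_diag0_gap1 => [|i]; first by rewrite is_trig_mxB ?is_trig_mxM.
have -> : (A *m B - B *m A) i i = (A *m B) i i - (B *m A) i i by rewrite !mxE.
by rewrite !mxdiag_trigM // mulrC subrr.
Qed.

End TrigGap.

Section ConjMap.
Variables (F K : fieldType) (n : nat) (f : {rmorphism F -> K}) (P : 'M[K]_n).
Hypothesis Punit : P \in unitmx.
Implicit Types A B : 'M[F]_n.

Definition conj_map_mx A := P *m map_mx f A *m invmx P.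

Lemma conj_map_mx1 : conj_map_mx 1%:M = 1%:M.
Proof. by rewrite /conj_map_mx map_mx1 mulmx1 mulmxV. Qed.

Lemma conj_map_mxM A B : conj_map_mx (A *m B) = conj_map_mx A *m conj_map_mx B.
Proof. by rewrite /conj_map_mx map_mxM !mulmxA mulmxKV. Qed.

Lemma conj_map_mxX A k : conj_map_mx (A ^+ k) = conj_map_mx A ^+ k.
Proof.
elim: k => [|k IHk]; first exact: conj_map_mx1.
by rewrite !exprS -!mulmxE conj_map_mxM IHk.
Qed.

Lemma conj_map_mxDZ a A B : conj_map_mx (a *: A + B) = f a *: conj_map_mx A + conj_map_mx B.
Proof. by rewrite /conj_map_mx map_mxD map_mxZ mulmxDr mulmxDl -scalemxAr -scalemxAl. Qed.

Lemma conj_map_mxB A B : conj_map_mx (A - B) = conj_map_mx A - conj_map_mx B.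
Proof. by rewrite /conj_map_mx map_mxB mulmxBr mulmxBl. Qed.

Lemma conj_map_mx_eq0 A : conj_map_mx A = 0 -> A = 0.
Proof.
move=> A0; apply: (@map_mx_inj _ _ f); rewrite map_mx0.
by rewrite -[map_mx f A](mulKmx Punit) -[P *m _](mulmxKV Punit) -/(conj_map_mx A) A0 mul0mx mulmx0.
Qed.

End ConjMap.

Section LieBracket.
Variables (F : fieldType) (L : vectType F) (br : L -> L -> L).
Hypothesis lie : lie_axioms br.

Lemma brDZl a x y z : br (a *: x + y) z = a *: br x z + br y z.
Proof. by case: lie. Qed.

Lemma brDZr a x y z : br x (a *: y + z) = a *: br x y + br x z.
Proof. by case: lie. Qed.

Lemma brxx x : br x x = 0.
Proof. by case: lie. Qed.

Lemma br_jacobi x y z : br x (br y z) + br y (br z x) + br z (br x y) = 0.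
Proof. by case: lie. Qed.

Lemma br0l z : br 0 z = 0.
Proof.
have := brDZl 1 0 0 z; rewrite !scale1r addr0 => double.
by apply: (addrI (br 0 z)); rewrite addr0 -double.
Qed.

Lemma br0r z : br z 0 = 0.
Proof.
have := brDZr 1 z 0 0; rewrite !scale1r addr0 => double.
by apply: (addrI (br z 0)); rewrite addr0 -double.
Qed.

Lemma brDl x y z : br (x + y) z = br x z + br y z.
Proof. by rewrite -(scale1r x) brDZl !scale1r. Qed.

Lemma brDr x y z : br x (y + z) = br x y + br x z.
Proof. by rewrite -(scale1r y) brDZr !scale1r. Qed.

Lemma brZl a x z : br (a *: x) z = a *: br x z.
Proof. by rewrite -[a *: x]addr0 brDZl br0l addr0. Qed.

Lemma brZr a x z : br z (a *: x) = a *: br z x.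
Proof. by rewrite -[a *: x]addr0 brDZr br0r addr0. Qed.

Lemma brNC x y : br x y = - br y x.
Proof.
apply/eqP; rewrite -addr_eq0; apply/eqP.
by have := brxx (x + y); rewrite brDl !brDr !brxx add0r addr0.
Qed.

Lemma brNr x y : br x (- y) = - br x y.
Proof. by rewrite -scaleN1r brZr scaleN1r. Qed.

Lemma brJ x y z : br (br x y) z = br x (br y z) - br y (br x z).
Proof.
move/eqP: (br_jacobi x y z); rewrite addr_eq0 => /eqP jac.
by rewrite brNC -jac [br z x]brNC brNr.
Qed.

Lemma br_sumr x (I : Type) (s : seq I) (P : pred I) (c : I -> L) :
  br x (\sum_(i <- s | P i) c i) = \sum_(i <- s | P i) br x (c i).
Proof. exact: (big_morph (br x) (brDr x) (br0r x)). Qed.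

End LieBracket.

Section AdjointMatrix.
Variables (F : fieldType) (L : vectType F) (br : L -> L -> L).
Hypothesis lie : lie_axioms br.
Local Notation n := (\dim (fullv : {vspace L})).
Local Notation coords := (passmx.rVof (vbasis (fullv : {vspace L}))).
Local Notation ad := (ad_mx br).

Lemma coords_br x y : coords (br x y) = coords y *m ad x.
Proof.
apply/rowP => j; rewrite -[in LHS](passmx.rVofK (vbasisP fullv) y) /passmx.vecof.
rewrite (br_sumr lie) !mxE linear_sum; apply: eq_bigr => i _.
by rewrite (brZr lie) linearZ /= !mxE (tnth_nth 0).
Qed.

Lemma coords_eq0 y : coords y = 0 -> y = 0.
Proof. by move/eqP; rewrite (passmx.rVof_eq0 (vbasisP fullv)) => /eqP. Qed.

Lemma ad_mx_coords_inj (A B : 'M[F]_n) : (forall y, coords y *m A = coords y *m B) -> A = B.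
Proof.
move=> eqAB; apply/row_matrixP => i; rewrite !rowE.
have := eqAB (passmx.vecof (vbasis fullv) (delta_mx 0 i)).
by rewrite (passmx.vecofK (vbasisP fullv)).
Qed.

Lemma ad_mxDZ a x y : ad (a *: x + y) = a *: ad x + ad y.
Proof.
apply: ad_mx_coords_inj => z; rewrite -coords_br (brDZl lie) mulmxDr -scalemxAr -!coords_br.
exact: passmx.rVof_linear.
Qed.

Lemma ad_mx_br x y : ad (br x y) = ad y *m ad x - ad x *m ad y.
Proof.
apply: ad_mx_coords_inj => z; rewrite mulmxBr !mulmxA -!coords_br (brJ lie).
by rewrite -scaleN1r addrC passmx.rVof_linear scaleN1r addrC.
Qed.

Lemma acts_nilP x : acts_nil br x <-> exists k, ad x ^+ k = 0.
Proof.
have coords_iter k y : coords (iter k (br x) y) = coords y *m ad x ^+ k.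
  elim: k => [|k IHk]; first by rewrite expr0 mulmx1.
  by rewrite iterS coords_br IHk exprSr -mulmxE mulmxA.
split=> [[k adk]|[k adk]]; exists k.
  apply: ad_mx_coords_inj => y; rewrite -coords_iter adk mulmx0.
  by apply/eqP; rewrite (passmx.rVof_eq0 (vbasisP fullv)).
by move=> y; apply: coords_eq0; rewrite coords_iter adk mulmx0.
Qed.

Definition ad_word (xs : seq L) := foldr (fun x A => A *m ad x) 1%:M xs.

Lemma coords_foldr_br xs y : coords (foldr br y xs) = coords y *m ad_word xs.
Proof.
elim: xs => [|x xs IHxs] /=; first by rewrite mulmx1.
by rewrite coords_br IHxs mulmxA.
Qed.

End AdjointMatrix.

Section Triangulable.
Variables (F : fieldType) (L : vectType F) (br : L -> L -> L).
Hypothesis lie : lie_axioms br.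
Local Notation n := (\dim (fullv : {vspace L})).
Local Notation ad := (ad_mx br).

Lemma triangulable_onS (S T : {vspace L}) :
  (T <= S)%VS -> triangulable_on br S -> triangulable_on br T.
Proof.
move=> sTS [K [f [P [Punit trigS]]]]; exists K, f, P; split=> // x xT.
exact/trigS/(subvP sTS).
Qed.

Lemma acts_nil_trig_gap1 (K : fieldType) (f : {rmorphism F -> K}) (P : 'M[K]_n) x :
  P \in unitmx -> is_trig_mx (conj_map_mx f P (ad x)) ->
  acts_nil br x <-> trig_gap 1 (conj_map_mx f P (ad x)).
Proof.
move=> Punit trigx; rewrite (acts_nilP lie); split=> [[k adk]|gap1].
  apply: (trig_nilpotent_gap1 (k := k)) trigx _.
  by rewrite -conj_map_mxX // adk /conj_map_mx map_mx0 mulmx0 mul0mx.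
exists n; apply: (conj_map_mx_eq0 (f := f) Punit).
by rewrite conj_map_mxX //; apply/trig_gap_eq0/trig_gapX.
Qed.

Variable S : {vspace L}.
Hypothesis triS : triangulable_on br S.

Lemma triangulable_on_conj :
  exists (K : closedFieldType) (f : {rmorphism F -> K}) (P : 'M[K]_n),
  P \in unitmx /\ forall x, x \in S -> is_trig_mx (conj_map_mx f P (ad x)).
Proof. exact: triS. Qed.

Lemma triangulable_nilDZ a x y : x \in S -> y \in S ->
  acts_nil br x -> acts_nil br y -> acts_nil br (a *: x + y).
Proof.
move=> xS yS; have [K [f [P [Punit trigS]]]] := triangulable_on_conj.
have xyS : a *: x + y \in S by rewrite memvD ?memvZ.
move=> /(acts_nil_trig_gap1 Punit (trigS _ xS)) gapx.
move=> /(acts_nil_trig_gap1 Punit (trigS _ yS)) gapy.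
apply/(acts_nil_trig_gap1 Punit (trigS _ xyS)).
by rewrite (ad_mxDZ lie) conj_map_mxDZ; apply: trig_gapDZ.
Qed.

Lemma triangulable_nil_br x y : x \in S -> y \in S -> acts_nil br (br x y).
Proof.
move=> xS yS; have [K [f [P [Punit trigS]]]] := triangulable_on_conj.
have [trigx trigy] := (trigS _ xS, trigS _ yS).
have trig_br : is_trig_mx (conj_map_mx f P (ad (br x y))).
  by rewrite (ad_mx_br lie) conj_map_mxB !conj_map_mxM //; apply: is_trig_mxB; apply: is_trig_mxM.
apply/(acts_nil_trig_gap1 Punit trig_br).
by rewrite (ad_mx_br lie) conj_map_mxB !conj_map_mxM //; exact: trig_commutator_gap1.
Qed.

Lemma triangulable_nil_words xs y : size xs = n -> {subset xs <= S} ->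
  (forall x, x \in xs -> acts_nil br x) -> foldr br y xs = 0.
Proof.
move=> sizexs sxS nilxs; have [K [f [P [Punit trigS]]]] := triangulable_on_conj.
have : trig_gap (size xs) (conj_map_mx f P (ad_word br xs)).
  elim: xs {sizexs} sxS nilxs => [|x xs IHxs] sxS nilxs /=.
    by rewrite conj_map_mx1 //; exact: trig_gap_mx1.
  rewrite conj_map_mxM // -addn1; apply: trig_gapM.
    by apply: IHxs => z zxs; [apply: sxS | apply: nilxs]; rewrite inE zxs orbT.
  have xS := sxS x (mem_head _ _).
  exact/(acts_nil_trig_gap1 Punit (trigS _ xS))/nilxs/mem_head.
rewrite sizexs => /trig_gap_eq0/(conj_map_mx_eq0 Punit) wordxs0.
by apply: coords_eq0; rewrite (coords_foldr_br lie) wordxs0 mulmx0.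
Qed.

End Triangulable.

Section Subspaces.
Variables (F : fieldType) (L : vectType F).

Lemma maximal_vspace_exists (Q : {vspace L} -> Prop) (U : {vspace L}) : Q U ->
  exists M : {vspace L},
    [/\ (U <= M)%VS, Q M & forall W, Q W -> (M <= W)%VS -> W = M].
Proof.
have [k] : exists k, (\dim (fullv : {vspace L}) - \dim U < k)%N by eexists; exact: ltnSn.
elim: k U => [//|k IHk] U ltk QU.
have [[W [QW sUW nWU]]|noW] := classic (exists W, [/\ Q W, (U <= W)%VS & W != U]).
  have ltUW : (\dim U < \dim W)%N by rewrite (ltn_leqif (dimv_leqif_eq sUW)) eq_sym.
  have leW := dimvS (subvf W).
  have [M [sWM QM maxM]] := IHk W ltac:(lia) QW.
  by exists M; split=> //; exact: subv_trans sWM.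
exists U; split=> // W QW sUW; apply: NNPP => nWU.
by apply: noW; exists W; split=> //; apply/eqP.
Qed.

Lemma linear_pred_vspace (P : L -> Prop) : P 0 ->
  (forall a x y, P x -> P y -> P (a *: x + y)) ->
  exists U : {vspace L}, forall x, x \in U <-> P x.
Proof.
move=> P0 PDZ.
pose inP (U : {vspace L}) := forall x, x \in U -> P x.
have inP0 : inP 0%VS by move=> x; rewrite memv0 => /eqP ->.
have [U [_ PU maxU]] := maximal_vspace_exists inP0.
exists U => x; split=> [/PU //|Px].
have PUx y : y \in (U + <[x]>)%VS -> P y.
  by case/memv_addP=> u /PU Pu [_ /vlineP[a ->] ->]; rewrite addrC; exact: PDZ.
by rewrite -(maxU _ PUx (addvSl U _)) (subvP (addvSr U _)) ?memv_line.
Qed.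

Variable br : L -> L -> L.

Lemma maximal_subalgebra_exists (S : {vspace L}) : is_subalgebra br S -> S != fullv ->
  exists2 M, maximal_subalgebra br M & (S <= M)%VS.
Proof.
move=> subS nSf.
have [M [sSM [subM nMf] maxM]] :=
  maximal_vspace_exists (Q := fun W => is_subalgebra br W /\ W != fullv) (conj subS nSf).
exists M => //; split=> // W subW sMW.
by have [->|nWf] := eqVneq W fullv; [right | left; exact: maxM].
Qed.

(* Keep bracketing v0 with elements of K while the result stays outside U; this
   stops within N steps since words of length N vanish. *)
Lemma engel_fixed_mod (K U V : {vspace L}) N v0 :
  (forall xs, size xs = N -> {subset xs <= K} -> forall y, foldr br y xs = 0) ->
  (forall k v, k \in K -> v \in V -> br k v \in V) ->
  v0 \in V -> v0 \notin U ->
  exists v, [/\ v \in V, v \notin U & forall k, k \in K -> br k v \in U].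
Proof.
move=> wordsK stabV v0V v0U.
suff: forall m v, v \in V -> v \notin U ->
    (forall xs, size xs = m -> {subset xs <= K} -> foldr br v xs \in U) ->
    exists v, [/\ v \in V, v \notin U & forall k, k \in K -> br k v \in U].
  by move/(_ N v0 v0V v0U); apply=> xs sizexs sxK; rewrite wordsK ?mem0v.
elim=> [|m IHm] v vV vU wordsU.
  by case/negP: vU; exact: (wordsU [::]).
have [fixv|nfixv] := classic (forall k, k \in K -> br k v \in U); first by exists v.
have [k nkv] := not_all_ex_not _ _ nfixv.
have [kK kvU] := imply_to_and _ _ nkv.
apply: (IHm (br k v)); [exact: stabV | exact/negP | move=> xs sizexs sxK].
rewrite -[br k v]/(foldr br v [:: k]) -foldr_cat; apply: wordsU.
  by rewrite size_cat sizexs addn1.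
by move=> z; rewrite mem_cat => /orP[/sxK //|]; rewrite inE => /eqP ->.
Qed.

End Subspaces.

Section NilPart.
Variables (F : fieldType) (L : vectType F) (br : L -> L -> L).
Hypothesis lie : lie_axioms br.
Local Notation n := (\dim (fullv : {vspace L})).

Definition nil_part (S N : {vspace L}) := forall x, x \in N <-> x \in S /\ acts_nil br x.

Lemma acts_nil0 : acts_nil br 0.
Proof. by exists 1%N => y; rewrite /= (br0l lie). Qed.

Lemma nil_part_exists S : triangulable_on br S -> exists N, nil_part S N.
Proof.
move=> triS; apply: linear_pred_vspace => [|a x y [xS nilx] [yS nily]].
  by split; [exact: mem0v | exact: acts_nil0].
by split; [rewrite memvD ?memvZ | apply: (triangulable_nilDZ lie triS)].
Qed.

Lemma nil_part_self S : is_nil_on br S -> nil_part S S.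
Proof. by move=> nilS x; split=> [xS | []//]; split=> //; exact: nilS. Qed.

Variables (S N : {vspace L}).
Hypothesis partN : nil_part S N.

Lemma nil_part_sub : (N <= S)%VS.
Proof. by apply/subvP => x /partN[]. Qed.

Lemma nil_part_nil : is_nil_on br N.
Proof. by move=> x /partN[]. Qed.

Hypothesis triS : triangulable_on br S.

Lemma nil_part_words xs y : size xs = n -> {subset xs <= N} -> foldr br y xs = 0.
Proof.
by move=> sizexs sxN; apply: (triangulable_nil_words lie triS) => // x /sxN /partN[].
Qed.

Lemma exists_normalizing_vector (K V : {vspace L}) : (K <= N)%VS ->
  (forall k v, k \in K -> v \in V -> br k v \in V) -> ~~ (V <= K)%VS ->
  exists v, [/\ v \in V, v \notin K & forall k, k \in K -> br v k \in K].
Proof.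
move=> sKN stabV /subvPn[v0 v0V v0K].
have wordsK xs : size xs = n -> {subset xs <= K} -> forall y, foldr br y xs = 0.
  by move=> sizexs sxK y; apply: nil_part_words => // x /sxK; exact: (subvP sKN).
have [v [vV vK fixv]] := engel_fixed_mod wordsK stabV v0V v0K.
by exists v; split=> // k kK; rewrite (brNC lie) memvN fixv.
Qed.

Hypothesis subS : is_subalgebra br S.

Lemma nil_part_br x y : x \in S -> y \in S -> br x y \in N.
Proof.
by move=> xS yS; apply/partN; split; [exact: subS | exact: (triangulable_nil_br lie triS)].
Qed.

Lemma nil_part_subalgebra : is_subalgebra br N.
Proof. by move=> x y /partN[xS _] /partN[yS _]; exact: nil_part_br. Qed.

Lemma nil_part_ideal : is_ideal_of br S N.
Proof. by split=> [|x y xS /partN[yS _]]; [exact: nil_part_sub | exact: nil_part_br]. Qed.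

Lemma nil_partP : is_nil_of br S N.
Proof.
split=> [||I [sIS _] nilI]; [exact: nil_part_ideal | exact: nil_part_nil |].
by apply/subvP => x xI; apply/partN; split; [exact: (subvP sIS) | exact: nilI].
Qed.

End NilPart.

Section Subalgebras.
Variables (F : fieldType) (L : vectType F) (br : L -> L -> L).

Lemma subalgebra_cap (S T : {vspace L}) :
  is_subalgebra br S -> is_subalgebra br T -> is_subalgebra br (S :&: T)%VS.
Proof.
move=> subS subT x y /memv_capP[xS xT] /memv_capP[yS yT].
by rewrite memv_cap subS ?subT.
Qed.

Hypothesis lie : lie_axioms br.

Lemma line_abelian (v : L) : is_abelian br <[v]>%VS.
Proof.
move=> _ _ /vlineP[a ->] /vlineP[b ->].
by rewrite (brZl lie) (brZr lie) (brxx lie) !scaler0.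
Qed.

Lemma subalgebra_line (v : L) : is_subalgebra br <[v]>%VS.
Proof. by move=> x y xv yv; rewrite (line_abelian xv yv) mem0v. Qed.

Lemma normalizer_exists K : exists N, is_normalizer br K N.
Proof.
apply: linear_pred_vspace => [k _|a x y Nx Ny k kK]; first by rewrite (br0l lie) mem0v.
by rewrite (brDZl lie) memvD ?memvZ ?Nx ?Ny.
Qed.

Variables (K N : {vspace L}).
Hypothesis normN : is_normalizer br K N.

Lemma normalizer_subalgebra : is_subalgebra br N.
Proof.
move=> x y /normN Nx /normN Ny; apply/normN => k kK.
by rewrite (brJ lie) memvB //; [apply: Nx; apply: Ny | apply: Ny; apply: Nx].
Qed.

Lemma normalizer_sub : is_subalgebra br K -> (K <= N)%VS.
Proof. by move=> subK; apply/subvP => x xK; apply/normN => k; exact: subK. Qed.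

End Subalgebras.

Section SimpleLieAlgebra.
Variables (F : fieldType) (L : vectType F) (br : L -> L -> L).
Hypothesis lie : lie_axioms br.
Hypothesis simple : is_simple br.
Hypothesis tri : forall S : {vspace L}, is_subalgebra br S -> S != fullv%VS ->
  triangulable_on br S.

Lemma ideal_trivial (I : {vspace L}) :
  (forall x y, y \in I -> br x y \in I) -> I = 0%VS \/ I = fullv.
Proof. by move=> idI; apply: simple.2; split=> [|x y _]; [exact: subvf | exact: idI]. Qed.

Lemma exists_neq0 : exists x : L, x != 0.
Proof.
apply: NNPP => all0; apply: simple.1 => x y _ _.
have -> : x = 0 by apply: NNPP => x0; apply: all0; exists x; exact/eqP.
exact: (br0l lie).
Qed.

Lemma line_neq_fullv (v : L) : <[v]>%VS != fullv.
Proof. by apply/eqP => vf; apply: simple.1; rewrite -vf; exact: (line_abelian lie). Qed.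

Lemma exists_br_neq0 x : x != 0 -> exists y, br x y != 0.
Proof.
move=> x0; apply: NNPP => xcentral.
have idx z w : w \in <[x]>%VS -> br z w \in <[x]>%VS.
  case/vlineP=> a ->; rewrite (brZr lie) (brNC lie).
  have -> : br x z = 0 by apply: NNPP => xz0; apply: xcentral; exists z; exact/eqP.
  by rewrite oppr0 scaler0 mem0v.
case: (ideal_trivial idx) => [x_0|]; last exact/eqP/line_neq_fullv.
by move: (memv_line x); rewrite x_0 memv0 (negPf x0).
Qed.

Lemma normalizer_proper K N :
  K != 0%VS -> K != fullv -> is_normalizer br K N -> N != fullv.
Proof.
move=> nK0 nKf normN; apply/eqP => Nf.
have idK x y : y \in K -> br x y \in K by apply: (normN x).1; rewrite Nf memvf.
by case: (ideal_trivial idK) => K_; [move: nK0 | move: nKf]; rewrite K_ eqxx.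
Qed.

Lemma maximal_normalizer M K N : maximal_subalgebra br M -> K != 0%VS -> (K <= M)%VS ->
  is_normalizer br K N -> (M <= N)%VS -> N = M.
Proof.
move=> [_ nMf maxM] nK0 sKM normN sMN.
have nKf : K != fullv by apply: contraNneq nMf => Kf; rewrite eqEsubv subvf -Kf sKM.
case: (maxM _ (normalizer_subalgebra lie normN) sMN) => // Nf.
by move: (normalizer_proper nK0 nKf normN); rewrite Nf eqxx.
Qed.

Lemma maximal_subalgebra_neq0 M : maximal_subalgebra br M -> M != 0%VS.
Proof.
move=> [_ _ maxM]; apply/eqP => M0; have [x x0] := exists_neq0.
have sMx : (M <= <[x]>)%VS by rewrite M0 sub0v.
case: (maxM _ (subalgebra_line lie (v := x)) sMx) => [xM|xf].
  by move: (memv_line x); rewrite xM M0 memv0 (negPf x0).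
by move: (line_neq_fullv x); rewrite xf eqxx.
Qed.

(* Otherwise Engel's argument would put a maximal subalgebra strictly inside its
   own normalizer. *)
Lemma nil_vspace_proper S : is_nil_on br S -> S != fullv.
Proof.
move=> nilS; apply/eqP => Sf; have [x _] := exists_neq0.
have [M maxM _] := maximal_subalgebra_exists (subalgebra_line lie (v := x)) (line_neq_fullv x).
have [subM nMf _] := maxM; have triM := tri subM nMf.
have partM : nil_part br M M by apply: nil_part_self => y _; apply: nilS; rewrite Sf memvf.
have [|v [_ vM normv]] := exists_normalizing_vector lie partM triM (V := fullv) (subvv M)
    (fun _ _ _ _ => memvf _).
  by move: nMf; rewrite eqEsubv subvf.
have [Z normZ] := normalizer_exists lie M.
have ZM := maximal_normalizer maxM (maximal_subalgebra_neq0 maxM) (subvv M) normZ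
  (normalizer_sub normZ subM).
by case/negP: vM; rewrite -ZM; apply/normZ.
Qed.

Lemma nil_part_maximal_nil M N : maximal_subalgebra br M -> nil_part br M N ->
  N != 0%VS -> maximal_nil_subalgebra br N.
Proof.
move=> maxM partN nN0; have [subM nMf _] := maxM; have triM := tri subM nMf.
split=> [||S subS nilS sNS]; [exact: nil_part_subalgebra | exact: nil_part_nil |].
apply: NNPP => nSN; have triS := tri subS (nil_vspace_proper nilS).
have stabS k v : k \in N -> v \in S -> br k v \in S by move=> kN; apply: subS; exact: (subvP sNS).
have [|v [vS vN normv]] := exists_normalizing_vector lie (nil_part_self nilS) triS sNS stabS.
  by apply/negP => sSN; apply: nSN; apply/eqP; rewrite eqEsubv sSN sNS.
have [Z normZ] := normalizer_exists lie N.
have [sNM idN] := nil_part_ideal lie partN triM subM.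
have sMZ : (M <= Z)%VS by apply/subvP => x xM; apply/normZ => k; exact: idN.
have ZM := maximal_normalizer maxM nN0 sNM normZ sMZ.
by case/negP: vN; apply/partN; split; [rewrite -ZM; exact/normZ | exact: nilS].
Qed.

Lemma maximal_subalgebra_nil M : maximal_subalgebra br M ->
  (is_abelian br M /\ (forall x, x \in M -> acts_nil br x -> x = 0))
  \/ (exists N, [/\ is_nil_of br M N, N != 0%VS & maximal_nil_subalgebra br N]).
Proof.
move=> maxM; have [subM nMf _] := maxM; have triM := tri subM nMf.
have [N partN] := nil_part_exists lie triM.
have [N0|nN0] := eqVneq N 0%VS; last first.
  by right; exists N; split; [exact: nil_partP | | exact: (nil_part_maximal_nil maxM)].
have inN0 x : x \in N -> x = 0 by rewrite N0 memv0 => /eqP.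
left; split=> [x y xM yM|x xM nilx]; apply: inN0; last exact/partN.
exact: (nil_part_br lie partN).
Qed.

Lemma normalizer_max_nil_maximal K : K != 0%VS -> maximal_nil_subalgebra br K ->
  exists N, is_normalizer br K N /\ maximal_subalgebra br N.
Proof.
move=> nK0 [subK nilK maxK]; have [Z normZ] := normalizer_exists lie K.
have sKZ := normalizer_sub normZ subK.
exists Z; split=> //; split=> [||S subS sZS]; first exact: (normalizer_subalgebra lie normZ).
  exact: normalizer_proper nK0 (nil_vspace_proper nilK) normZ.
have [->|nSf] := eqVneq S fullv; [by right | left].
have triS := tri subS nSf; have [NS partNS] := nil_part_exists lie triS.
have sKS := subv_trans sKZ sZS.
have NSK : NS = K.
  apply: maxK; [exact: nil_part_subalgebra partNS triS subS | exact: nil_part_nil partNS |].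
  by apply/subvP => x xK; apply/partNS; split; [exact: (subvP sKS) | exact: nilK].
apply/eqP; rewrite eqEsubv sZS andbT; apply/subvP => x xS; apply/normZ => k kK.
by rewrite -NSK (nil_part_br lie partNS) // (subvP sKS).
Qed.

Lemma nil_part_cap_grows M1 M3 D Z :
  maximal_subalgebra br M1 -> maximal_subalgebra br M3 -> M1 != M3 ->
  is_subalgebra br D -> is_nil_on br D -> (D <= M1)%VS ->
  is_normalizer br D Z -> (Z <= M3)%VS ->
  exists2 D', nil_part br (M1 :&: M3) D' & (\dim D < \dim D')%N.
Proof.
move=> [subM1 nM1f maxM1] [subM3 nM3f _] n13 subD nilD sDM1 normZ sZM3.
have triM1 := tri subM1 nM1f; have [N1 partN1] := nil_part_exists lie triM1.
have sDM3 := subv_trans (normalizer_sub normZ subD) sZM3.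
have [sN1D|nsN1D] := boolP (N1 <= D)%VS.
  have sM1Z : (M1 <= Z)%VS.
    apply/subvP => x xM1; apply/normZ => k kD; apply: (subvP sN1D).
    by rewrite (nil_part_br lie partN1) // (subvP sDM1).
  case: (maxM1 _ subM3 (subv_trans sM1Z sZM3)) => M3_; [move: n13 | move: nM3f];
    by rewrite M3_ eqxx.
have sDN1 : (D <= N1)%VS.
  by apply/subvP => x xD; apply/partN1; split; [exact: (subvP sDM1) | exact: nilD].
have stabN1 k u : k \in D -> u \in N1 -> br k u \in N1.
  by move=> kD /partN1[uM1 _]; rewrite (nil_part_br lie partN1) // (subvP sDM1).
have [v [vN1 vD normv]] := exists_normalizing_vector lie partN1 triM1 sDN1 stabN1 nsN1D.
have triM13 := triangulable_onS (capvSl M1 M3) triM1.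
have [D' partD'] := nil_part_exists lie triM13.
have sDD' : (D <= D')%VS.
  apply/subvP => x xD; apply/partD'; rewrite memv_cap (subvP sDM1) ?(subvP sDM3) //.
  by split=> //; exact: nilD.
have vD' : v \in D'.
  have [vM1 nilv] := (partN1 v).1 vN1.
  by apply/partD'; rewrite memv_cap vM1 (subvP sZM3) //; apply/normZ.
exists D' => //; rewrite (ltn_leqif (dimv_leqif_eq sDD')).
by apply: contraNneq vD => ->.
Qed.

Lemma nil_part_cap_maximal_eq0 M1 M2 D :
  maximal_subalgebra br M1 -> maximal_subalgebra br M2 -> M1 != M2 ->
  nil_part br (M1 :&: M2) D -> D = 0%VS.
Proof.
have [k] : exists k, (\dim (fullv : {vspace L}) - \dim D < k)%N by eexists; exact: ltnSn.
elim: k M1 M2 D => [//|k IHk] M1 M2 D ltk max1 max2 n12 partD.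
apply/eqP; apply: contraNT n12 => nD0.
have [subM1 nM1f _] := max1; have [subM2 _ _] := max2.
have triD := triangulable_onS (capvSl M1 M2) (tri subM1 nM1f).
have subD := nil_part_subalgebra lie partD triD (subalgebra_cap subM1 subM2).
have sDM1 := subv_trans (nil_part_sub partD) (capvSl M1 M2).
have sDM2 := subv_trans (nil_part_sub partD) (capvSr M1 M2).
have nDf : D != fullv by apply: contraNneq nM1f => Df; rewrite eqEsubv subvf -Df sDM1.
have [Z normZ] := normalizer_exists lie D.
have [M3 max3 sZM3] := maximal_subalgebra_exists (normalizer_subalgebra lie normZ)
  (normalizer_proper nD0 nDf normZ).
have eqM3 Mi : maximal_subalgebra br Mi -> (D <= Mi)%VS -> Mi = M3.
  move=> maxi sDMi; apply/eqP; apply: contraT => ni3.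
  have [D' partD' ltD'] := nil_part_cap_grows maxi max3 ni3 subD (nil_part_nil partD) sDMi
    normZ sZM3.
  have leD' := dimvS (subvf D').
  have D'0 := IHk Mi M3 D' ltac:(lia) maxi max3 ni3 partD'.
  by move: ltD'; rewrite D'0 dimv0.
by rewrite (eqM3 M1 max1 sDM1) (eqM3 M2 max2 sDM2).
Qed.

Lemma maximal_subalgebra_cap_nil M1 M2 :
  maximal_subalgebra br M1 -> maximal_subalgebra br M2 -> M1 != M2 ->
  (forall x, x \in (M1 :&: M2)%VS -> acts_nil br x -> x = 0) /\
  is_abelian br (M1 :&: M2)%VS.
Proof.
move=> max1 max2 n12; have [subM1 nM1f _] := max1; have [subM2 _ _] := max2.
have triD := triangulable_onS (capvSl M1 M2) (tri subM1 nM1f).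
have [D partD] := nil_part_exists lie triD.
have inD0 x : x \in D -> x = 0.
  by rewrite (nil_part_cap_maximal_eq0 max1 max2 n12 partD) memv0 => /eqP.
split=> [x xM nilx|x y xM yM]; apply: inD0; first exact/partD.
exact: (nil_part_br lie partD triD (subalgebra_cap subM1 subM2)).
Qed.

Lemma simple_two_generated : two_generated br.
Proof.
have [[x [x0 nilx]]|nonil] := classic (exists x, x != 0 /\ acts_nil br x).
  have [M maxM sxM] := maximal_subalgebra_exists (subalgebra_line lie (v := x)) (line_neq_fullv x).
  have [_ nMf _] := maxM.
  have /subvPn[y _ yM] : ~~ (fullv <= M)%VS by move: nMf; rewrite eqEsubv subvf.
  exists x, y => S subS xS yS; apply/eqP/contraT => nSf.
  have [M' maxM' sSM'] := maximal_subalgebra_exists subS nSf.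
  have nMM' : M != M' by apply: contraNneq yM => ->; exact: (subvP sSM').
  have xMM' : x \in (M :&: M')%VS by rewrite memv_cap (subvP sxM) ?memv_line ?(subvP sSM').
  by rewrite ((maximal_subalgebra_cap_nil maxM maxM' nMM').1 x xMM' nilx) eqxx in x0.
have [x x0] := exists_neq0; have [y xy0] := exists_br_neq0 x0.
exists x, y => S subS xS yS; apply/eqP/contraT => nSf.
by case: nonil; exists (br x y); split=> //; exact: (triangulable_nil_br lie (tri subS nSf)).
Qed.

End SimpleLieAlgebra.

Theorem theorem4p4 (F : fieldType) (L : vectType F) (br : L -> L -> L) :
  lie_axioms br -> is_simple br ->
  (forall S : {vspace L}, is_subalgebra br S -> S != fullv%VS ->
     triangulable_on br S) ->
  [/\ (* (1) *)
      (forall M : {vspace L}, maximal_subalgebra br M ->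
         (is_abelian br M /\ (forall x, x \in M -> acts_nil br x -> x = 0))
         \/ (exists N : {vspace L},
               [/\ is_nil_of br M N, N != 0%VS & maximal_nil_subalgebra br N])),
      (* (2) *)
      (forall K : {vspace L}, K != 0%VS -> maximal_nil_subalgebra br K ->
         exists N : {vspace L},
           is_normalizer br K N /\ maximal_subalgebra br N),
      (* (3) *)
      (forall M1 M2 : {vspace L},
         maximal_subalgebra br M1 -> maximal_subalgebra br M2 -> M1 != M2 ->
         (forall x, x \in (M1 :&: M2)%VS -> acts_nil br x -> x = 0) /\
         is_abelian br (M1 :&: M2)%VS) &
      (* (4) *)
      two_generated br].
Proof.
move=> lie simple tri; split.
- exact: maximal_subalgebra_nil.
- exact: normalizer_max_nil_maximal.
- exact: maximal_subalgebra_cap_nil.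
- exact: simple_two_generated.
Qed.
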